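(* Let $\tau\in\mathscr C^r(\mathbb{S}^1,\mathbb{R})$ and $R>\|\tau'\|_\infty$. If $\widetilde R>0$ satisfies $\vartheta_R-\vartheta_\tau\ge\widetilde R$, then $\widetilde{\mathcal N}_{\widetilde R}(n)\le\mathcal N(\tau,R;n)$ for all $n\ge1$; if $\widetilde R>\vartheta_R+\vartheta_\tau$, then $\mathcal N(\tau,R;n)\le\widetilde{\mathcal N}_{\widetilde R}(n)$ for all $n\ge1$. Consequently, $\mathcal N(\tau)=1$ if and only if $\lim_{n\to\infty}n^{-1}\log\widetilde{\mathcal N}_{\widetilde R}(n)=0$ for every $\widetilde R>0$.
   Context: $\mathbb{S}^1=\mathbb{R}/\mathbb{Z}$, $\mathbb{T}^2=\mathbb{S}^1\times\mathbb{S}^1$, $r\ge2$. $E$ is a $\mathscr C^r$ expanding circle map of degree $\ell\ge2$, $1<\lambda\le E'\le\Lambda$, $0$ a fixed point. $f(x,s)=(E(x),s+\tau(x)\bmod1)$; $\vartheta_\tau=\|\tau'\|_\infty/(\lambda-1)$; for $R>0$, $\vartheta_R=R/(\lambda-1)$ and $\mathscr K_R=\{(\xi,\eta):|\eta|\le\vartheta_R|\xi|\}$; $\mathcal N(\tau,R;n)=\sup_{z\in\mathbb{T}^2}\sup_v\#\{\zeta\in f^{-n}(z):v\in Df^n(\zeta)\mathscr K_R\}$ (sup over unit vectors $v$), and $\mathcal N(\tau)=\lim_n\mathcal N(\tau,R;n)^{1/n}$ (exists, independent of $R>\|\tau'\|_\infty$). Symbolic coding: $\mathcal A=\{0,\dots,\ell-1\}$;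 the points of $E^{-1}(0)$ divide $\mathbb{S}^1$ into half-open intervals $\mathcal I(j)$ each mapped bijectively onto $\mathbb{S}^1$ by $E$; for $\alpha=(\alpha_n,\dots,\alpha_1)\in\mathcal A^n$, $\mathcal I(\alpha)=\bigcap_{i=0}^{n-1}E^{-i}(\mathcal I(\alpha_{n-i}))$, $x_\alpha$ the unique point of $\mathcal I(\alpha)$ with $E^n(x_\alpha)=x$, $[\alpha]_k=(\alpha_k,\dots,\alpha_1)$; for infinite sequences $\alpha=(\dots,\alpha_2,\alpha_1)\in\mathcal A^\infty$ the truncations $[\alpha]_k$ are defined likewise, and a finite word $\alpha\in\mathcal A^n$ is identified with any infinite sequence extending it where needed. $S(x;\alpha)=\sum_{k=1}^\infty\tau'(x_{[\alpha]_k})/(E^k)'(x_{[\alpha]_k})$. For $\widetilde R>0$, $\widetilde{\mathcal N}_{\widetilde R}(n)=\sup_{y\in\mathbb{S}^1,\eta\in\mathbb{R}}\#\{\alpha\in\mathcal A^n: |\eta-S(y;\alpha)|\le\widetilde R\,((E^n)'(y_\alpha))^{-1}\}$, where for $\alpha\in\mathcal A^n$ the value $S(y;\alpha)$ is understood as $S(y;\tilde\alpha)$ for an arbitrary fixed extension $\tilde\alpha\in\mathcal A^\infty$ of $\alpha$. *)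

From Stdlib Require Import Reals Lra List ClassicalEpsilon.
Open Scope R_scope.

Fixpoint Cr (r : nat) (f : R -> R) : Prop :=
  match r with
  | O => continuity f
  | S k => exists f', (forall x, derivable_pt_lim f x (f' x)) /\ Cr k f'
  end.

Definition supnorm (g : R -> R) : R :=
  epsilon (inhabits 0) (fun m => is_lub (fun y => exists x, y = Rabs (g x)) m).

(* cardinality of a finite set (0 if not finite) *)
Definition fcard {T : Type} (P : T -> Prop) : nat :=
  match excluded_middle_informative
          (exists l : list T, NoDup l /\ forall x, In x l <-> P x) with
  | left H => length (proj1_sig (constructive_indefinite_description _ H))
  | right _ => 0%nat
  end.

(* supremum (= maximum) of a nat-valued function over a domain D (0 if none) *)
Definition natsup {A : Type} (D : A -> Prop) (F : A -> nat) : nat :=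
  match excluded_middle_informative
          (exists m : nat, (forall a, D a -> (F a <= m)%nat) /\
                           exists a, D a /\ F a = m) with
  | left H => proj1_sig (constructive_indefinite_description _ H)
  | right _ => 0%nat
  end.

(* S^1 = R/Z is represented by the fundamental domain [0,1);
   a circle map is given by a lift E : R -> R, acting on S^1 as frac o E. *)
Definition in_S1 (x : R) : Prop := 0 <= x < 1.
Definition Ec (E : R -> R) (x : R) : R := frac_part (E x).

Definition f_skew (E tau : R -> R) (p : R * R) : R * R :=
  (frac_part (E (fst p)), frac_part (snd p + tau (fst p))).

Definition Df (dE dtau : R -> R) (p : R * R) (w : R * R) : R * R :=
  (dE (fst p) * fst w, dtau (fst p) * fst w + snd w).

Fixpoint Dfn (E tau dE dtau : R -> R) (n : nat) (p w : R * R) : R * R :=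
  match n with
  | O => w
  | S m => Dfn E tau dE dtau m (f_skew E tau p) (Df dE dtau p w)
  end.

Definition theta (lam K : R) : R := K / (lam - 1).

Definition cone (th : R) (w : R * R) : Prop := Rabs (snd w) <= th * Rabs (fst w).

Definition Ncount (E tau dE dtau : R -> R) (lam K : R) (n : nat) (z v : R * R) : nat :=
  fcard (fun zeta : R * R =>
     in_S1 (fst zeta) /\ in_S1 (snd zeta) /\
     Nat.iter n (f_skew E tau) zeta = z /\
     exists w, cone (theta lam K) w /\ Dfn E tau dE dtau n zeta w = v).

Definition Nf (E tau dE dtau : R -> R) (lam K : R) (n : nat) : nat :=
  natsup (fun zv : (R * R) * (R * R) =>
            in_S1 (fst (fst zv)) /\ in_S1 (snd (fst zv)) /\
            (fst (snd zv)) ^ 2 + (snd (snd zv)) ^ 2 = 1)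
         (fun zv => Ncount E tau dE dtau lam K n (fst zv) (snd zv)).

Definition Ntau_is (E tau dE dtau : R -> R) (lam c : R) : Prop :=
  forall K, supnorm dtau < K ->
    Un_cv (fun n => Rpower (INR (Nf E tau dE dtau lam K n)) (/ INR n)) c.

Definition Ij (E : R -> R) (j : nat) (q : R) : Prop := INR j <= E q < INR j + 1.

(* Infinite sequences alpha = (..., alpha_2, alpha_1) are functions a with a k = alpha_k
   (k >= 1).  p in I([a]_k) = intersection_{i<k} E^{-i}(I(alpha_{k-i})). *)
Definition inI (E : R -> R) (a : nat -> nat) (k : nat) (p : R) : Prop :=
  in_S1 p /\ forall i, (i < k)%nat -> Ij E (a (k - i)%nat) (Nat.iter i (Ec E) p).

Definition xw (E : R -> R) (x : R) (a : nat -> nat) (k : nat) : R :=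
  epsilon (inhabits 0) (fun p => inI E a k p /\ Nat.iter k (Ec E) p = x).

Fixpoint dEn (E dE : R -> R) (k : nat) (p : R) : R :=
  match k with
  | O => 1
  | S m => dE p * dEn E dE m (Ec E p)
  end.

Definition Sterm (E dE dtau : R -> R) (x : R) (a : nat -> nat) (k : nat) : R :=
  dtau (xw E x a k) / dEn E dE k (xw E x a k).
Definition Ssum (E dE dtau : R -> R) (x : R) (a : nat -> nat) : R :=
  epsilon (inhabits 0)
    (fun l => infinite_sum (fun k => Sterm E dE dtau x a (S k)) l).

(* finite words alpha in A^n, as lists [alpha_1; ...; alpha_n] *)
Definition word (ell n : nat) (w : list nat) : Prop :=
  length w = n /\ Forall (fun j => (j < ell)%nat) w.

(* a fixed choice of extension of each finite word to an infinite sequence *)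
Definition ext_ok (ell : nat) (ext : list nat -> nat -> nat) : Prop :=
  forall w, Forall (fun j => (j < ell)%nat) w ->
    (forall k, (1 <= k <= length w)%nat -> ext w k = nth (k - 1) w 0%nat) /\
    (forall k, (1 <= k)%nat -> (ext w k < ell)%nat).

Definition Ntil (E dE dtau : R -> R) (ell : nat) (ext : list nat -> nat -> nat)
    (Rt : R) (n : nat) : nat :=
  natsup (fun ye : R * R => in_S1 (fst ye))
    (fun ye => fcard (fun w : list nat =>
        word ell n w /\
        Rabs (snd ye - Ssum E dE dtau (fst ye) (ext w))
          <= Rt / dEn E dE n (xw E (fst ye) (ext w) n))).

(* A preimage [zeta] of [z] under [f^n] is determined by the itinerary of its
   base point.  On a vector [(xi, eta)], [Df^n(zeta)] acts as
   [(D xi, eta + xi D P)] with [D = (E^n)'] and [P] the [n]-th partial sum of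
   [S(x; alpha)], whose remainder [S - P] is at most [vartheta_tau / D].  So the
   image of the cone has slopes within [(vartheta_R + vartheta_tau) / D] of
   [S(x; alpha)], and it contains every slope within
   [(vartheta_R - vartheta_tau) / D] of it: counting preimages and counting
   words bound each other, and squeezing [ln N / n] between the two counts gives
   the equivalence of zero growth rates. *)

From Stdlib Require Import Reals List Lra Lia ZArith ClassicalEpsilon Classical.
Open Scope R_scope.

Definition enumerates {T : Type} (P : T -> Prop) (l : list T) : Prop :=
  NoDup l /\ forall x, In x l <-> P x.

Definition inj_on {T U : Type} (P : T -> Prop) (f : T -> U) : Prop :=
  forall x y, P x -> P y -> f x = f y -> x = y.

Lemma fcard_enumerates {T : Type} (P : T -> Prop) (l : list T) :
  enumerates P l -> fcard P = length l.
Proof.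
  intros [Hnd Hin]. unfold fcard.
  destruct (excluded_middle_informative _) as [H | H].
  - destruct (constructive_indefinite_description _ H) as [l' [Hnd' Hin']]; simpl.
    apply Nat.le_antisymm; apply NoDup_incl_length; auto;
      intros x Hx; [apply Hin; apply Hin' | apply Hin'; apply Hin]; auto.
  - exfalso. apply H. exists l. split; auto.
Qed.

Lemma enumerates_inj_on {T U : Type} (P : T -> Prop) (f : T -> U) (lU : list U) :
  (forall x, P x -> In (f x) lU) -> inj_on P f -> exists l, enumerates P l.
Proof.
  revert P. induction lU as [| u lU IH]; intros P Hmap Hinj.
  - exists nil. split; [constructor |]. intro x. simpl. split; [tauto |].
    intro Hx. exact (Hmap x Hx).
  - destruct (IH (fun x => P x /\ f x <> u)) as [l [Hnd Hin]].
    + intros x [Hx Hfx]. destruct (Hmap x Hx) as [-> | ?]; tauto.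
    + intros x y [Hx _] [Hy _]. apply Hinj; auto.
    + destruct (classic (exists x0, P x0 /\ f x0 = u)) as [[x0 [Hx0 Hfx0]] | Hno].
      * exists (x0 :: l). split.
        -- constructor; auto. rewrite Hin. tauto.
        -- intro x. simpl. rewrite Hin. split.
           ++ intros [<- | [Hx _]]; auto.
           ++ intro Hx. destruct (classic (f x = u)) as [Hfx | Hfx]; auto.
              left. apply Hinj; congruence.
      * exists l. split; auto. intro x. rewrite Hin. split; [tauto |].
        intro Hx. split; auto. intro Hfx. apply Hno. eauto.
Qed.

Lemma fcard_le_inj_on {T U : Type} (P : T -> Prop) (Q : U -> Prop) (f : T -> U) (lQ : list U) :
  enumerates Q lQ -> (forall x, P x -> Q (f x)) -> inj_on P f -> (fcard P <= fcard Q)%nat.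
Proof.
  intros [HndQ HinQ] Hmap Hinj.
  destruct (enumerates_inj_on P f lQ) as [lP [HndP HinP]]; auto.
  { intros x Hx. apply HinQ. auto. }
  rewrite (fcard_enumerates P lP), (fcard_enumerates Q lQ) by (split; auto).
  rewrite <- (length_map f lP). apply NoDup_incl_length.
  - apply NoDup_map_NoDup_ForallPairs; auto.
    intros x y Hx Hy. apply Hinj; apply HinP; auto.
  - intros u Hu. apply in_map_iff in Hu as [x [<- Hx]]. apply HinQ, Hmap, HinP, Hx.
Qed.

Lemma enumerates_lt (N : nat) : enumerates (fun m => (m < N)%nat) (seq 0 N).
Proof. split; [apply seq_NoDup |]. intro m. rewrite in_seq. lia. Qed.

Lemma fcard_le_code {T : Type} (P : T -> Prop) (c : T -> nat) (N : nat) :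
  (forall x, P x -> (c x < N)%nat) -> inj_on P c -> (fcard P <= N)%nat.
Proof.
  intros Hlt Hinj. rewrite <- (length_seq N 0), <- (fcard_enumerates _ _ (enumerates_lt N)).
  exact (fcard_le_inj_on P _ c _ (enumerates_lt N) Hlt Hinj).
Qed.

Lemma finite_of_code {T : Type} (P : T -> Prop) (c : T -> nat) (N : nat) :
  (forall x, P x -> (c x < N)%nat) -> inj_on P c -> exists l, enumerates P l.
Proof.
  intros Hlt Hinj. apply (enumerates_inj_on P c (seq 0 N)); auto.
  intros x Hx. apply in_seq. specialize (Hlt x Hx). lia.
Qed.

Lemma bounded_nat_family_has_max {A : Type} (D : A -> Prop) (F : A -> nat) (B : nat) :
  (exists a, D a) -> (forall a, D a -> (F a <= B)%nat) ->
  exists m, (forall a, D a -> (F a <= m)%nat) /\ exists a, D a /\ F a = m.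
Proof.
  induction B as [| B IH]; intros [a0 Ha0] HB.
  - exists 0%nat. split; auto. exists a0. specialize (HB a0 Ha0). split; auto; lia.
  - destruct (classic (exists a, D a /\ F a = S B)) as [H | H].
    + exists (S B). auto.
    + apply IH; eauto. intros a Ha. specialize (HB a Ha).
      destruct (Nat.eq_dec (F a) (S B)); [exfalso; eauto | lia].
Qed.

Lemma le_natsup {A : Type} (D : A -> Prop) (F : A -> nat) (B : nat) (a : A) :
  (forall a, D a -> (F a <= B)%nat) -> D a -> (F a <= natsup D F)%nat.
Proof.
  intros HB Ha. unfold natsup. destruct (excluded_middle_informative _) as [H | H].
  - destruct (proj2_sig (constructive_indefinite_description _ H)) as [Hm _]. auto.
  - exfalso. apply H. eapply bounded_nat_family_has_max; eauto.
Qed.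

Lemma natsup_le {A : Type} (D : A -> Prop) (F : A -> nat) (m : nat) :
  (forall a, D a -> (F a <= m)%nat) -> (natsup D F <= m)%nat.
Proof.
  intro HB. unfold natsup. destruct (excluded_middle_informative _) as [H | H].
  - destruct (proj2_sig (constructive_indefinite_description _ H)) as [_ [a [Ha <-]]]. auto.
  - lia.
Qed.

Lemma frac_part_add_IZR (x : R) (z : Z) : frac_part (x + IZR z) = frac_part x.
Proof.
  destruct (Int_part_frac_part_spec (x + IZR z) (Int_part x + z) (frac_part x)) as [_ H].
  - destruct (base_fp x); lra.
  - rewrite plus_IZR. pose proof (Rplus_Int_part_frac_part x). lra.
  - symmetry. exact H.
Qed.

Lemma frac_part_id (x : R) : 0 <= x < 1 -> frac_part x = x.
Proof.
  intro H. destruct (Int_part_frac_part_spec x 0 x H) as [_ E]; [simpl; lra | symmetry; exact E].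
Qed.

Lemma frac_part_range (x : R) : 0 <= frac_part x < 1.
Proof. destruct (base_fp x); lra. Qed.

Lemma frac_part_frac_add (x y : R) : frac_part (frac_part x + y) = frac_part (x + y).
Proof.
  replace (frac_part x + y) with ((x + y) + IZR (- Int_part x))
    by (rewrite opp_IZR; unfold frac_part; ring).
  apply frac_part_add_IZR.
Qed.

Lemma frac_part_add_inj (s s' c : R) : 0 <= s < 1 -> 0 <= s' < 1 ->
  frac_part (s + c) = frac_part (s' + c) -> s = s'.
Proof.
  intros Hs Hs' E. unfold frac_part in E.
  assert (Hz : IZR (Int_part (s + c) - Int_part (s' + c)) = s - s')
    by (rewrite minus_IZR; lra).
  assert (Int_part (s + c) - Int_part (s' + c) = 0)%Z as Hz0.
  { assert (-1 < IZR (Int_part (s + c) - Int_part (s' + c)) < 1) as [H1 H2] by lra.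
    apply lt_IZR in H1, H2. lia. }
  rewrite Hz0 in Hz. simpl in Hz. lra.
Qed.

Lemma periodic_frac_part (g : R -> R) :
  (forall x, g (x + 1) = g x) -> forall x, g x = g (frac_part x).
Proof.
  intros Hper.
  assert (Hnat : forall (n : nat) x, g (x + INR n) = g x).
  { induction n as [| n IH]; intro x; [simpl; rewrite Rplus_0_r; auto |].
    rewrite S_INR, <- Rplus_assoc, Hper. auto. }
  assert (Hint : forall (z : Z) x, g (x + IZR z) = g x).
  { intros z x. destruct (Z_le_gt_dec 0 z).
    - rewrite <- (Z2Nat.id z), <- INR_IZR_INZ by lia. apply Hnat.
    - rewrite <- (Hnat (Z.to_nat (- z))). f_equal.
      rewrite INR_IZR_INZ, Z2Nat.id, opp_IZR by lia. ring. }
  intro x. unfold frac_part.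
  replace (x - IZR (Int_part x)) with (x + IZR (- Int_part x)) by (rewrite opp_IZR; ring).
  symmetry. apply Hint.
Qed.

Lemma ln_0 : ln 0 = 0.
Proof. unfold ln. destruct (Rlt_dec 0 0) as [h | h]; [exfalso; lra | reflexivity]. Qed.

Lemma ln_le_of_le (x y : R) : 0 < x -> x <= y -> ln x <= ln y.
Proof.
  intros Hx [Hlt | ->]; [left; apply ln_increasing; auto | right; reflexivity].
Qed.

Lemma ln_INR_nonneg (a : nat) : 0 <= ln (INR a).
Proof.
  destruct a as [| a]; [simpl; rewrite ln_0; lra |].
  rewrite <- ln_1. apply ln_le_of_le; [lra |]. apply (le_INR 1). lia.
Qed.

Lemma ln_INR_le (a b : nat) : (a <= b)%nat -> ln (INR a) <= ln (INR b).
Proof.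
  intro H. destruct a as [| a].
  - simpl. rewrite ln_0. apply ln_INR_nonneg.
  - apply ln_le_of_le; [apply (lt_INR 0); lia | apply le_INR; lia].
Qed.

Lemma growth_rate_zero_le (a b : nat -> nat) :
  (forall n, (1 <= n)%nat -> (a n <= b n)%nat) ->
  Un_cv (fun n => ln (INR (b n)) / INR n) 0 -> Un_cv (fun n => ln (INR (a n)) / INR n) 0.
Proof.
  intros Hab Hb eps Heps. destruct (Hb eps Heps) as [N HN]. exists (S N). intros n Hn.
  specialize (HN n ltac:(lia)). unfold Rdist in *. rewrite Rminus_0_r in *.
  assert (Hinv : 0 < / INR n) by (apply Rinv_0_lt_compat, (lt_INR 0); lia).
  pose proof (ln_INR_nonneg (a n)). pose proof (ln_INR_le _ _ (Hab n ltac:(lia))).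
  unfold Rdiv in *. rewrite Rabs_right in * by nra. nra.
Qed.

Lemma root_cv_1_iff_growth_rate_zero (a : nat -> nat) :
  Un_cv (fun n => Rpower (INR (a n)) (/ INR n)) 1 <->
  Un_cv (fun n => ln (INR (a n)) / INR n) 0.
Proof.
  split; intro H.
  - assert (Hln : continuity_pt ln 1)
      by (apply derivable_continuous_pt; exists (/ 1); apply derivable_pt_lim_ln; lra).
    rewrite <- ln_1. apply (Un_cv_ext (fun n => ln (Rpower (INR (a n)) (/ INR n)))).
    + intro n. rewrite ln_Rpower. unfold Rdiv. ring.
    + exact (continuity_seq ln _ 1 Hln H).
  - rewrite <- exp_0. unfold Rpower.
    apply (Un_cv_ext (fun n => exp (ln (INR (a n)) / INR n))).
    + intro n. unfold Rdiv. f_equal. ring.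
    + apply continuity_seq; [apply derivable_continuous_pt, derivable_pt_exp | exact H].
Qed.

Lemma sum_f_R0_geometric_tail (u : nat -> R) (N : nat) (c lam : R) : 1 < lam -> 0 <= c ->
  (forall j, (1 <= j)%nat -> Rabs (u (N + j)%nat) <= c / lam ^ j) ->
  forall m, Rabs (sum_f_R0 u (N + m) - sum_f_R0 u N) <= c / (lam - 1).
Proof.
  intros Hlam Hc Hu.
  assert (Hpos : forall m, 0 < lam ^ m) by (intro m; apply pow_lt; lra).
  assert (Hsharp : forall m,
    Rabs (sum_f_R0 u (N + m) - sum_f_R0 u N) <= c * (1 - / lam ^ m) / (lam - 1)).
  { induction m as [| m IH].
    - rewrite Nat.add_0_r, Rminus_diag, Rabs_R0. simpl. apply Req_le. field. lra.
    - rewrite Nat.add_succ_r. simpl sum_f_R0.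
      replace (sum_f_R0 u (N + m) + u (S (N + m)) - sum_f_R0 u N)
        with ((sum_f_R0 u (N + m) - sum_f_R0 u N) + u (N + S m)%nat)
        by (rewrite Nat.add_succ_r; ring).
      eapply Rle_trans; [apply Rabs_triang |].
      specialize (Hu (S m) ltac:(lia)). pose proof (Hpos m).
      replace (c * (1 - / lam ^ S m) / (lam - 1))
        with (c * (1 - / lam ^ m) / (lam - 1) + c / lam ^ S m) by (simpl; field; lra).
      lra. }
  intro m. eapply Rle_trans; [apply Hsharp |].
  pose proof (Hpos m). unfold Rdiv. apply Rmult_le_compat_r; [left; apply Rinv_0_lt_compat; lra |].
  assert (0 < / lam ^ m) by (apply Rinv_0_lt_compat; auto). nra.
Qed.

Lemma infinite_sum_tail_le (u : nat -> R) (l : R) (N : nat) (T : R) : infinite_sum u l ->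
  (forall m, Rabs (sum_f_R0 u (N + m) - sum_f_R0 u N) <= T) -> Rabs (l - sum_f_R0 u N) <= T.
Proof.
  intros Hl H. apply Rnot_lt_le. intro Hgt.
  destruct (Hl (Rabs (l - sum_f_R0 u N) - T) ltac:(lra)) as [n0 Hn0].
  specialize (Hn0 (N + n0)%nat ltac:(lia)). specialize (H n0). unfold Rdist in Hn0.
  pose proof (Rabs_triang (l - sum_f_R0 u (N + n0)) (sum_f_R0 u (N + n0) - sum_f_R0 u N)).
  rewrite Rabs_minus_sym in Hn0.
  replace (l - sum_f_R0 u (N + n0) + (sum_f_R0 u (N + n0) - sum_f_R0 u N))
    with (l - sum_f_R0 u N) in H0 by ring.
  lra.
Qed.

Lemma infinite_sum_of_geometric_bound (u : nat -> R) (c lam : R) : 1 < lam ->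
  (forall k, Rabs (u k) <= c / lam ^ k) -> exists l, infinite_sum u l.
Proof.
  intros Hlam Hu.
  assert (Hc : 0 <= c).
  { specialize (Hu 0%nat). simpl in Hu. pose proof (Rabs_pos (u 0%nat)). lra. }
  assert (Habs : {l | Un_cv (sum_f_R0 (fun k => Rabs (u k))) l}).
  { apply growing_cv.
    - intro n. simpl. pose proof (Rabs_pos (u (S n))). lra.
    - exists (c + c / (lam - 1)). intros s [n ->].
      pose proof (sum_f_R0_geometric_tail (fun k => Rabs (u k)) 0 c lam Hlam Hc) as Htail.
      specialize (Htail ltac:(intros j _; cbv beta; rewrite Rabs_Rabsolu; apply Hu) n).
      simpl in Htail. pose proof (Hu 0%nat) as Hu0. simpl in Hu0.
      eapply Rle_trans in Htail; [| apply Rle_abs]. lra. }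
  destruct (cv_cauchy_2 u (cauchy_abs u (cv_cauchy_1 _ Habs))) as [l Hl].
  exists l. exact Hl.
Qed.

Lemma supnorm_ge (g : R -> R) :
  (exists B, forall x, Rabs (g x) <= B) -> forall x, Rabs (g x) <= supnorm g.
Proof.
  intros [B HB].
  assert (Hlub : is_lub (fun y => exists x, y = Rabs (g x)) (supnorm g)).
  { unfold supnorm. apply epsilon_spec.
    destruct (completeness (fun y => exists x, y = Rabs (g x))) as [m Hm].
    - exists B. intros y [x ->]. apply HB.
    - exists (Rabs (g 0)). eauto.
    - eauto. }
  intro x. apply (proj1 Hlub). eauto.
Qed.

Lemma periodic_continuous_bounded (g : R -> R) :
  continuity g -> (forall x, g (x + 1) = g x) -> exists B, forall x, Rabs (g x) <= B.
Proof.
  intros Hg Hper.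
  destruct (continuity_ab_maj (fun x => Rabs (g x)) 0 1 ltac:(lra)) as [xm [Hxm _]].
  { intros c _. apply (continuity_pt_comp g Rabs); [apply Hg | apply Rcontinuity_abs]. }
  exists (Rabs (g xm)). intro x. rewrite (periodic_frac_part g Hper x).
  apply Hxm. pose proof (frac_part_range x). lra.
Qed.

Lemma Cr_continuous (k : nat) (f : R -> R) : Cr k f -> continuity f.
Proof.
  destruct k as [| k]; [auto |]. intros [f' [Hf' _]] x.
  apply derivable_continuous_pt. exists (f' x). apply Hf'.
Qed.

Lemma Cr_derivative_continuous (k : nat) (f df : R -> R) :
  Cr (S k) f -> (forall x, derivable_pt_lim f x (df x)) -> continuity df.
Proof.
  intros [f' [Hf' Hcr]] Hdf x.
  apply (continuity_pt_locally_ext f' df 1 x); [lra | | apply (Cr_continuous k), Hcr].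
  intros y _. apply (uniqueness_limite f y); auto.
Qed.

Lemma derivative_periodic (f df : R -> R) : (forall x, derivable_pt_lim f x (df x)) ->
  (forall x, f (x + 1) = f x) -> forall x, df (x + 1) = df x.
Proof.
  intros Hdf Hper x. apply (uniqueness_limite f x); auto.
  intros eps Heps. destruct (Hdf (x + 1) eps Heps) as [del Hdel]. exists del.
  intros h Hh Hhd. specialize (Hdel h Hh Hhd).
  replace (x + 1 + h) with ((x + h) + 1) in Hdel by ring. rewrite !Hper in Hdel. exact Hdel.
Qed.

Fixpoint word_code (ell : nat) (w : list nat) : nat :=
  match w with
  | nil => 0%nat
  | j :: w' => (j + ell * word_code ell w')%nat
  end.

Lemma word_code_lt (ell n : nat) (w : list nat) : word ell n w -> (word_code ell w < ell ^ n)%nat.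
Proof.
  revert n. induction w as [| j w IH]; intros n [Hlen Hall]; simpl in *.
  - subst. simpl. lia.
  - destruct n as [| n]; [discriminate |]. inversion Hall; subst.
    assert (word_code ell w < ell ^ n)%nat by (apply IH; split; auto).
    simpl. nia.
Qed.

Lemma word_code_inj (ell n : nat) : inj_on (word ell n) (word_code ell).
Proof.
  intro w1. revert n. induction w1 as [| j w IH]; intros n w2 [Hl Hf] [Hl2 Hf2] Hc.
  - subst. destruct w2; [auto | discriminate].
  - destruct w2 as [| j2 w2]; [simpl in *; lia |]. simpl in *.
    inversion Hf; inversion Hf2; subst.
    assert (word_code ell w = word_code ell w2 /\ j = j2) as [E1 <-].
    { destruct (Nat.lt_total (word_code ell w) (word_code ell w2)) as [h | [h | h]]; nia. }
    f_equal. apply (IH (length w)); [split | split |]; auto.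
Qed.

Lemma fcard_words_le (ell n : nat) (X : list nat -> Prop) :
  (fcard (fun w => word ell n w /\ X w) <= ell ^ n)%nat.
Proof.
  apply (fcard_le_code _ (word_code ell)).
  - intros w [Hw _]. apply word_code_lt; auto.
  - intros w1 w2 [H1 _] [H2 _]. apply (word_code_inj ell n); auto.
Qed.

Lemma words_enumerable (ell n : nat) (X : list nat -> Prop) :
  exists l, enumerates (fun w => word ell n w /\ X w) l.
Proof.
  apply (finite_of_code _ (word_code ell) (ell ^ n)).
  - intros w [Hw _]. apply word_code_lt; auto.
  - intros w1 w2 [H1 _] [H2 _]. apply (word_code_inj ell n); auto.
Qed.

Lemma cone_image_slope (D xi eta P S thK thM : R) : 0 < D -> xi <> 0 ->
  Rabs eta <= thK * Rabs xi -> Rabs (S - P) <= thM / D ->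
  Rabs ((eta + xi * (D * P)) / (D * xi) - S) <= (thK + thM) / D.
Proof.
  intros HD Hxi Hcone HSP.
  replace ((eta + xi * (D * P)) / (D * xi) - S) with (eta / (D * xi) + (P - S)) by (field; lra).
  eapply Rle_trans; [apply Rabs_triang |]. rewrite Rabs_minus_sym.
  assert (Hxi' : 0 < Rabs xi) by (apply Rabs_pos_lt; auto).
  assert (Rabs (eta / (D * xi)) <= thK / D).
  { unfold Rdiv. rewrite Rabs_mult, Rabs_inv, Rabs_mult, (Rabs_right D) by lra.
    apply (Rmult_le_reg_r (D * Rabs xi)); [nra |].
    rewrite Rmult_assoc, Rinv_l by nra. replace (thK * / D * (D * Rabs xi)) with (thK * Rabs xi)
      by (field; lra). lra. }
  unfold Rdiv in *. lra.
Qed.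

Lemma cone_preimage_of_slope (D c eta P S Rt thK thM : R) : 0 < D -> 0 < c ->
  Rabs (eta - S) <= Rt / D -> Rabs (S - P) <= thM / D -> Rt + thM <= thK ->
  Rabs (c * eta - c / D * (D * P)) <= thK * Rabs (c / D).
Proof.
  intros HD Hc HetaS HSP HRt.
  replace (c * eta - c / D * (D * P)) with (c * ((eta - S) + (S - P))) by (field; lra).
  assert (HcD : 0 < c / D) by (apply Rdiv_lt_0_compat; lra).
  rewrite Rabs_mult, (Rabs_right c), (Rabs_right (c / D)) by lra.
  pose proof (Rabs_triang (eta - S) (S - P)).
  assert (Hinv : 0 < / D) by (apply Rinv_0_lt_compat; lra). unfold Rdiv in *. nra.
Qed.

Section SkewProduct.

Variables (ell : nat) (E dE tau dtau : R -> R) (lam M : R) (ext : list nat -> nat -> nat).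
Hypothesis E_derivative : forall x, derivable_pt_lim E x (dE x).
Hypothesis dE_ge : forall x, lam <= dE x.
Hypothesis lam_gt_1 : 1 < lam.
Hypothesis E_degree : forall x, E (x + 1) = E x + INR ell.
Hypothesis E_0 : E 0 = 0.
Hypothesis dtau_le : forall x, Rabs (dtau x) <= M.
Hypothesis ext_valid : ext_ok ell ext.

Lemma E_increment (x y : R) : x <= y -> lam * (y - x) <= E y - E x.
Proof.
  intros [Hlt | <-]; [| lra].
  destruct (MVT_cor2 E dE x y Hlt (fun c _ => E_derivative c)) as [c [-> _]].
  apply Rmult_le_compat_r; [lra | apply dE_ge].
Qed.

Lemma E_1 : E 1 = INR ell.
Proof. rewrite <- (Rplus_0_l 1), E_degree, E_0. ring. Qed.

Lemma E_range (q : R) : in_S1 q -> 0 <= E q < INR ell.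
Proof.
  intros [H0 H1]. pose proof (E_increment 0 q H0). pose proof (E_increment q 1 ltac:(lra)).
  rewrite E_0 in *. rewrite E_1 in *. split; nra.
Qed.

Lemma Ij_Int_part (j : nat) (q : R) : Ij E j q -> Int_part (E q) = Z.of_nat j.
Proof. intro H. symmetry. apply Int_part_spec. rewrite <- INR_IZR_INZ. unfold Ij in H. lra. Qed.

Lemma Ij_Ec (j : nat) (q : R) : Ij E j q -> Ec E q = E q - INR j.
Proof. intro H. unfold Ec, frac_part. rewrite (Ij_Int_part j q H), INR_IZR_INZ. reflexivity. Qed.

Lemma Ij_unique (j j' : nat) (q : R) : Ij E j q -> Ij E j' q -> j = j'.
Proof. intros H H'. apply Nat2Z.inj. rewrite <- (Ij_Int_part j q), <- (Ij_Int_part j' q); auto. Qed.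

Lemma Ij_Ec_inj (j : nat) (q q' : R) : Ij E j q -> Ij E j q' -> Ec E q = Ec E q' -> q = q'.
Proof.
  intros H H' He. rewrite (Ij_Ec j q H), (Ij_Ec j q' H') in He.
  destruct (Rle_dec q q') as [h | h].
  - pose proof (E_increment q q' h). nra.
  - pose proof (E_increment q' q ltac:(lra)). nra.
Qed.

Lemma Ij_branch (j : nat) (t : R) : (j < ell)%nat -> in_S1 t ->
  exists q, in_S1 q /\ Ij E j q /\ Ec E q = t.
Proof.
  intros Hj [Ht0 Ht1].
  assert (Hl : INR j + 1 <= INR ell) by (rewrite <- S_INR; apply le_INR; lia).
  pose proof (pos_INR j).
  destruct (IVT_cor (fun q => E q - (INR j + t)) 0 1) as [q [Hq Hq0]].
  - intro x. apply continuity_pt_minus; [| apply continuity_pt_const; intros a b; auto].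
    apply derivable_continuous_pt. exists (dE x). apply E_derivative.
  - lra.
  - rewrite E_0, E_1. assert (0 <= INR ell - (INR j + t)) by lra. nra.
  - assert (Hq1 : q <> 1) by (intros ->; rewrite E_1 in Hq0; lra).
    assert (HIj : Ij E j q) by (unfold Ij; lra).
    exists q. split; [unfold in_S1; lra |]. split; auto. rewrite (Ij_Ec j q HIj). lra.
Qed.

Definition digit (q : R) : nat := Z.to_nat (Int_part (E q)).

Lemma digit_spec (q : R) : in_S1 q -> Ij E (digit q) q /\ (digit q < ell)%nat.
Proof.
  intro Hq. pose proof (E_range q Hq) as HE. destruct (base_Int_part (E q)) as [B1 B2].
  assert (Hnn : (0 <= Int_part (E q))%Z).
  { assert (Hgt : IZR (-1) < IZR (Int_part (E q))) by lra. apply lt_IZR in Hgt. lia. }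
  assert (HI : INR (digit q) = IZR (Int_part (E q)))
    by (unfold digit; rewrite INR_IZR_INZ, Z2Nat.id; auto).
  split; [unfold Ij; rewrite HI; lra |]. apply INR_lt. rewrite HI. lra.
Qed.

Lemma in_S1_iter_Ec (i : nat) (p : R) : in_S1 p -> in_S1 (Nat.iter i (Ec E) p).
Proof. intro H. destruct i; [exact H |]. apply frac_part_range. Qed.

Lemma inI_S (a : nat -> nat) (k : nat) (p : R) :
  inI E a (S k) p <-> in_S1 p /\ Ij E (a (S k)) p /\ inI E a k (Ec E p).
Proof.
  split.
  - intros [Hp H]. split; [exact Hp |]. split.
    + specialize (H 0%nat ltac:(lia)). rewrite Nat.sub_0_r in H. exact H.
    + split; [apply frac_part_range |]. intros i Hi. specialize (H (S i) ltac:(lia)).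
      rewrite Nat.iter_succ_r in H. replace (S k - S i)%nat with (k - i)%nat in H by lia. exact H.
  - intros [Hp [Hj [_ H]]]. split; [exact Hp |]. intros [| i] Hi.
    + rewrite Nat.sub_0_r. exact Hj.
    + rewrite Nat.iter_succ_r. replace (S k - S i)%nat with (k - i)%nat by lia. apply H. lia.
Qed.

Lemma inI_iter_Ec (a : nat -> nat) (k m : nat) (p : R) : (m <= k)%nat -> inI E a k p ->
  inI E a m (Nat.iter (k - m) (Ec E) p).
Proof.
  intros Hm [Hp H]. split; [apply in_S1_iter_Ec; auto |].
  intros i Hi. rewrite <- Nat.iter_add. specialize (H (i + (k - m))%nat ltac:(lia)).
  replace (k - (i + (k - m)))%nat with (m - i)%nat in H by lia. exact H.
Qed.

Definition admissible (a : nat -> nat) : Prop := forall k, (1 <= k)%nat -> (a k < ell)%nat.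

Lemma inI_exists (a : nat -> nat) (y : R) : admissible a -> in_S1 y ->
  forall k, exists p, inI E a k p /\ Nat.iter k (Ec E) p = y.
Proof.
  intros Ha Hy k. induction k as [| k [p [Hp Hit]]].
  - exists y. split; [split; [auto | intros; lia] | reflexivity].
  - destruct (Ij_branch (a (S k)) p (Ha (S k) ltac:(lia)) (proj1 Hp)) as [q [Hq [Hj HEc]]].
    exists q. split.
    + apply inI_S. rewrite HEc. auto.
    + rewrite Nat.iter_succ_r, HEc. exact Hit.
Qed.

Lemma inI_unique (a : nat -> nat) (k : nat) (p p' : R) : inI E a k p -> inI E a k p' ->
  Nat.iter k (Ec E) p = Nat.iter k (Ec E) p' -> p = p'.
Proof.
  revert p p'. induction k as [| k IH]; intros p p' H H' He; [exact He |].
  apply inI_S in H as [_ [Hj HI]]. apply inI_S in H' as [_ [Hj' HI']].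
  rewrite !Nat.iter_succ_r in He. apply (Ij_Ec_inj (a (S k))); auto.
Qed.

Lemma xw_spec (a : nat -> nat) (y : R) (k : nat) : admissible a -> in_S1 y ->
  inI E a k (xw E y a k) /\ Nat.iter k (Ec E) (xw E y a k) = y.
Proof. intros Ha Hy. unfold xw. apply epsilon_spec, inI_exists; auto. Qed.

Lemma xw_unique (a : nat -> nat) (y : R) (k : nat) (p : R) : admissible a -> in_S1 y ->
  inI E a k p -> Nat.iter k (Ec E) p = y -> xw E y a k = p.
Proof.
  intros Ha Hy Hp Hit. destruct (xw_spec a y k Ha Hy) as [Hx Hxit].
  apply (inI_unique a k); auto. congruence.
Qed.

Lemma xw_iter_Ec (a : nat -> nat) (y : R) (k m : nat) : admissible a -> in_S1 y ->
  (m <= k)%nat -> Nat.iter (k - m) (Ec E) (xw E y a k) = xw E y a m.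
Proof.
  intros Ha Hy Hm. destruct (xw_spec a y k Ha Hy) as [Hx Hxit].
  symmetry. apply xw_unique; auto; [apply inI_iter_Ec; auto |].
  rewrite <- Nat.iter_add. replace (m + (k - m))%nat with k by lia. exact Hxit.
Qed.

Lemma dEn_add (i j : nat) (p : R) :
  dEn E dE (i + j) p = dEn E dE i p * dEn E dE j (Nat.iter i (Ec E) p).
Proof.
  revert p. induction i as [| i IH]; intro p; simpl; [ring |].
  rewrite IH, <- Nat.iter_succ_r. simpl. ring.
Qed.

Lemma dEn_ge_pow (k : nat) (p : R) : lam ^ k <= dEn E dE k p.
Proof.
  revert p. induction k as [| k IH]; intro p; simpl; [lra |].
  pose proof (pow_lt lam k ltac:(lra)). apply Rmult_le_compat; try lra. apply dE_ge. apply IH.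
Qed.

Lemma dEn_pos (k : nat) (p : R) : 0 < dEn E dE k p.
Proof. pose proof (pow_lt lam k ltac:(lra)). pose proof (dEn_ge_pow k p). lra. Qed.

(* [dtau_sum k] is the derivative of the Birkhoff sum [tau_sum k]. *)
Fixpoint tau_sum (k : nat) (p : R) : R :=
  match k with O => 0 | S m => tau p + tau_sum m (Ec E p) end.

Fixpoint dtau_sum (k : nat) (p : R) : R :=
  match k with O => 0 | S m => dtau p + dE p * dtau_sum m (Ec E p) end.

Lemma iter_f_skew (n : nat) (p s : R) : 0 <= s < 1 ->
  Nat.iter n (f_skew E tau) (p, s) = (Nat.iter n (Ec E) p, frac_part (s + tau_sum n p)).
Proof.
  revert p s. induction n as [| n IH]; intros p s Hs.
  - simpl. rewrite Rplus_0_r, frac_part_id; auto.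
  - rewrite !Nat.iter_succ_r. unfold f_skew at 2. simpl fst; simpl snd.
    rewrite IH by apply frac_part_range. rewrite frac_part_frac_add, Rplus_assoc. reflexivity.
Qed.

Lemma Dfn_eq (n : nat) (p s xi eta : R) :
  Dfn E tau dE dtau n (p, s) (xi, eta) = (dEn E dE n p * xi, eta + xi * dtau_sum n p).
Proof.
  revert p s xi eta. induction n as [| n IH]; intros p s xi eta; simpl.
  - f_equal; ring.
  - unfold f_skew, Df. simpl. rewrite IH. unfold Ec. f_equal; ring.
Qed.

Fixpoint Ssum_partial (y : R) (a : nat -> nat) (m : nat) : R :=
  match m with O => 0 | S k => Ssum_partial y a k + Sterm E dE dtau y a (S k) end.

Lemma Ssum_partial_S (y : R) (a : nat -> nat) (N : nat) :
  Ssum_partial y a (S N) = sum_f_R0 (fun k => Sterm E dE dtau y a (S k)) N.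
Proof. induction N as [| N IH]; [simpl; ring |]. simpl sum_f_R0. rewrite <- IH. reflexivity. Qed.

Lemma dtau_sum_xw (a : nat -> nat) (y : R) (m : nat) : admissible a -> in_S1 y ->
  dtau_sum m (xw E y a m) = dEn E dE m (xw E y a m) * Ssum_partial y a m.
Proof.
  intros Ha Hy. induction m as [| m IH]; [simpl; ring |].
  pose proof (xw_iter_Ec a y (S m) m Ha Hy ltac:(lia)) as Hit.
  replace (S m - m)%nat with 1%nat in Hit by lia. simpl in Hit.
  simpl dtau_sum; simpl Ssum_partial. unfold Sterm. simpl dEn. rewrite Hit, IH.
  pose proof (dEn_pos m (xw E y a m)). pose proof (dE_ge (xw E y a (S m))).
  field. split; lra.
Qed.

Lemma M_nonneg : 0 <= M.
Proof. pose proof (dtau_le 0). pose proof (Rabs_pos (dtau 0)). lra. Qed.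

Lemma Sterm_le (y : R) (a : nat -> nat) (k : nat) :
  Rabs (Sterm E dE dtau y a k) <= M / dEn E dE k (xw E y a k).
Proof.
  unfold Sterm. pose proof (dEn_pos k (xw E y a k)).
  unfold Rdiv. rewrite Rabs_mult, Rabs_inv, (Rabs_right (dEn _ _ _ _)) by lra.
  apply Rmult_le_compat_r; [left; apply Rinv_0_lt_compat; lra | apply dtau_le].
Qed.

Lemma Ssum_converges (y : R) (a : nat -> nat) :
  infinite_sum (fun k => Sterm E dE dtau y a (S k)) (Ssum E dE dtau y a).
Proof.
  unfold Ssum. apply epsilon_spec, (infinite_sum_of_geometric_bound _ M lam lam_gt_1).
  intro k. eapply Rle_trans; [apply Sterm_le |]. pose proof M_nonneg.
  pose proof (pow_lt lam k ltac:(lra)). pose proof (dEn_ge_pow (S k) (xw E y a (S k))).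
  assert (lam ^ k <= lam ^ S k) by (simpl; nra).
  unfold Rdiv. apply Rmult_le_compat_l; auto. apply Rinv_le_contravar; lra.
Qed.

Lemma Ssum_remainder_le (a : nat -> nat) (y : R) (n : nat) : admissible a -> in_S1 y ->
  (1 <= n)%nat ->
  Rabs (Ssum E dE dtau y a - Ssum_partial y a n) <= theta lam M / dEn E dE n (xw E y a n).
Proof.
  intros Ha Hy Hn. set (D := dEn E dE n (xw E y a n)).
  assert (HD : 0 < D) by apply dEn_pos.
  assert (HMD : 0 <= M / D)
    by (apply Rmult_le_pos; [apply M_nonneg | left; apply Rinv_0_lt_compat, HD]).
  destruct n as [| N]; [lia |].
  assert (Hterm : forall j, (1 <= j)%nat ->
    Rabs (Sterm E dE dtau y a (S (N + j))) <= M / D / lam ^ j).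
  { intros j Hj. eapply Rle_trans; [apply Sterm_le |].
    replace (S (N + j)) with (j + S N)%nat by lia. rewrite dEn_add.
    pose proof (xw_iter_Ec a y (j + S N) (S N) Ha Hy ltac:(lia)) as Hit.
    replace (j + S N - S N)%nat with j in Hit by lia. rewrite Hit. fold D.
    set (Dj := dEn E dE j (xw E y a (j + S N))).
    assert (lam ^ j <= Dj) by apply dEn_ge_pow. pose proof (pow_lt lam j ltac:(lra)).
    replace (M / (Dj * D)) with (M / D / Dj) by (field; lra).
    apply Rmult_le_compat_l; [exact HMD | apply Rinv_le_contravar; lra]. }
  rewrite Ssum_partial_S.
  replace (theta lam M / D) with (M / D / (lam - 1)) by (unfold theta; field; lra).
  apply (infinite_sum_tail_le _ _ N); [apply Ssum_converges |].
  exact (sum_f_R0_geometric_tail _ N (M / D) lam lam_gt_1 HMD Hterm).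
Qed.

Lemma ext_admissible (n : nat) (w : list nat) : word ell n w -> admissible (ext w).
Proof. intros [_ Hall] k Hk. apply (proj2 (ext_valid w Hall)); auto. Qed.

Lemma word_eq_of_ext (n : nat) (w1 w2 : list nat) : word ell n w1 -> word ell n w2 ->
  (forall k, (1 <= k <= n)%nat -> ext w1 k = ext w2 k) -> w1 = w2.
Proof.
  intros [L1 F1] [L2 F2] H. apply (nth_ext w1 w2 0%nat 0%nat); [congruence |].
  intros i Hi. specialize (H (S i) ltac:(lia)).
  rewrite (proj1 (ext_valid w1 F1) (S i)), (proj1 (ext_valid w2 F2) (S i)) in H by lia.
  replace (S i - 1)%nat with i in H by lia. exact H.
Qed.

(* The itinerary [alpha_n ... alpha_1] of [p], stored as [alpha_1; ...; alpha_n]. *)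
Definition word_of (n : nat) (p : R) : list nat :=
  map (fun k => digit (Nat.iter (n - k) (Ec E) p)) (seq 1 n).

Lemma word_of_nth (n : nat) (p : R) (k : nat) : (1 <= k <= n)%nat ->
  nth (k - 1) (word_of n p) 0%nat = digit (Nat.iter (n - k) (Ec E) p).
Proof.
  intro Hk. unfold word_of.
  rewrite (nth_indep _ _ (digit (Nat.iter (n - 0) (Ec E) p)))
    by (rewrite length_map, length_seq; lia).
  rewrite (map_nth (fun k => digit (Nat.iter (n - k) (Ec E) p)) (seq 1 n) 0%nat).
  rewrite seq_nth by lia. do 3 f_equal. lia.
Qed.

Lemma word_of_word (n : nat) (p : R) : in_S1 p -> word ell n (word_of n p).
Proof.
  intro Hp. split; [unfold word_of; rewrite length_map, length_seq; reflexivity |].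
  apply Forall_forall. intros j Hj. unfold word_of in Hj. apply in_map_iff in Hj as [k [<- _]].
  apply digit_spec, in_S1_iter_Ec, Hp.
Qed.

Lemma xw_word_of (n : nat) (p y : R) : in_S1 y -> in_S1 p -> Nat.iter n (Ec E) p = y ->
  xw E y (ext (word_of n p)) n = p.
Proof.
  intros Hy Hp Hit. pose proof (word_of_word n p Hp) as Hw.
  apply (xw_unique _ y n p (ext_admissible n _ Hw)); auto.
  split; auto. intros i Hi.
  rewrite (proj1 (ext_valid _ (proj2 Hw)) (n - i)%nat) by (rewrite (proj1 Hw); lia).
  rewrite word_of_nth by lia. replace (n - (n - i))%nat with i by lia.
  apply digit_spec, in_S1_iter_Ec, Hp.
Qed.

Lemma xw_inj_words (n : nat) (y : R) (w1 w2 : list nat) : in_S1 y ->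
  word ell n w1 -> word ell n w2 -> xw E y (ext w1) n = xw E y (ext w2) n -> w1 = w2.
Proof.
  intros Hy Hw1 Hw2 Hx.
  destruct (xw_spec (ext w1) y n (ext_admissible n w1 Hw1) Hy) as [[_ I1] _].
  destruct (xw_spec (ext w2) y n (ext_admissible n w2 Hw2) Hy) as [[_ I2] _].
  rewrite Hx in I1. apply (word_eq_of_ext n); auto. intros k Hk.
  specialize (I1 (n - k)%nat ltac:(lia)). specialize (I2 (n - k)%nat ltac:(lia)).
  replace (n - (n - k))%nat with k in I1, I2 by lia. exact (Ij_unique _ _ _ I1 I2).
Qed.

Definition preimage (n : nat) (z zeta : R * R) : Prop :=
  in_S1 (fst zeta) /\ in_S1 (snd zeta) /\ Nat.iter n (f_skew E tau) zeta = z.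

Lemma preimage_base (n : nat) (z zeta : R * R) :
  preimage n z zeta -> Nat.iter n (Ec E) (fst zeta) = fst z.
Proof.
  destruct zeta as [p s]. intros [_ [Hs Hit]]. rewrite iter_f_skew in Hit by exact Hs.
  rewrite <- Hit. reflexivity.
Qed.

(* The base point is recovered from its itinerary by the coding, then the fibre
   coordinate because rotations of the circle are injective. *)
Lemma preimage_word_inj (n : nat) (z : R * R) : in_S1 (fst z) ->
  inj_on (preimage n z) (fun zeta => word_of n (fst zeta)).
Proof.
  intros Hz zeta1 zeta2 H1 H2 Hw.
  assert (Hp : fst zeta1 = fst zeta2).
  { rewrite <- (xw_word_of n (fst zeta1) (fst z)), <- (xw_word_of n (fst zeta2) (fst z));
      try apply preimage_base; try apply H1; try apply H2; auto.
    simpl in Hw. rewrite Hw. reflexivity. }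
  destruct zeta1 as [p s1], zeta2 as [p2 s2]. simpl in Hp. subst p2.
  destruct H1 as [_ [Hs1 It1]], H2 as [_ [Hs2 It2]].
  rewrite iter_f_skew in It1, It2 by auto. rewrite <- It2 in It1. injection It1 as It1.
  f_equal. exact (frac_part_add_inj s1 s2 _ Hs1 Hs2 It1).
Qed.

Lemma preimage_code (n : nat) (z : R * R) (P : R * R -> Prop) : in_S1 (fst z) ->
  (forall zeta, P zeta -> preimage n z zeta) ->
  (forall zeta, P zeta -> (word_code ell (word_of n (fst zeta)) < ell ^ n)%nat) /\
  inj_on P (fun zeta => word_code ell (word_of n (fst zeta))).
Proof.
  intros Hz HP. split.
  - intros zeta Hzeta. apply word_code_lt, word_of_word, HP, Hzeta.
  - intros zeta1 zeta2 H1 H2 Hc. apply (preimage_word_inj n z); auto.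
    apply (word_code_inj ell n); auto; apply word_of_word, HP; auto.
Qed.

Lemma Ncount_le_pow (K : R) (n : nat) (z v : R * R) : in_S1 (fst z) ->
  (Ncount E tau dE dtau lam K n z v <= ell ^ n)%nat.
Proof.
  intro Hz. unfold Ncount.
  destruct (preimage_code n z (fun zeta => in_S1 (fst zeta) /\ in_S1 (snd zeta) /\
      Nat.iter n (f_skew E tau) zeta = z /\ exists w, cone (theta lam K) w /\
      Dfn E tau dE dtau n zeta w = v)) as [Hlt Hinj]; auto.
  { intros zeta [A [B [C _]]]. split; auto. }
  exact (fcard_le_code _ _ _ Hlt Hinj).
Qed.

Lemma cone_image_fst_nonzero (th : R) (n : nat) (p s : R) (w v : R * R) :
  cone th w -> Dfn E tau dE dtau n (p, s) w = v -> fst v ^ 2 + snd v ^ 2 = 1 -> fst v <> 0.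
Proof.
  destruct w as [xi eta]. unfold cone. simpl. intros Hcone HD Hv Hv1.
  rewrite Dfn_eq in HD. subst v. simpl in *.
  assert (xi = 0) as ->.
  { pose proof (dEn_pos n p). destruct (Rmult_integral _ _ Hv1); auto. lra. }
  rewrite Rabs_R0, Rmult_0_r in Hcone.
  destruct (Req_dec eta 0) as [-> | Heta]; [lra |].
  pose proof (Rabs_pos_lt eta Heta). lra.
Qed.

Lemma Ncount_le_count_words (K Rt : R) (n : nat) (z v : R * R) : (1 <= n)%nat ->
  in_S1 (fst z) -> fst v ^ 2 + snd v ^ 2 = 1 -> theta lam K + theta lam M <= Rt ->
  (Ncount E tau dE dtau lam K n z v <=
   fcard (fun w => word ell n w /\
     (Rabs (snd v / fst v - Ssum E dE dtau (fst z) (ext w))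
       <= Rt / dEn E dE n (xw E (fst z) (ext w) n))%R))%nat.
Proof.
  intros Hn Hz Hv HRt. unfold Ncount.
  destruct (words_enumerable ell n (fun w => Rabs (snd v / fst v - Ssum E dE dtau (fst z) (ext w))
       <= Rt / dEn E dE n (xw E (fst z) (ext w) n))) as [lw Hlw].
  apply (fcard_le_inj_on _ _ (fun zeta => word_of n (fst zeta)) lw Hlw).
  - intros [p s] [Hp [Hs [Hit [[xi eta] [Hcone HD]]]]]. simpl fst.
    pose proof (cone_image_fst_nonzero _ n p s _ v Hcone HD Hv) as Hv1.
    assert (Hpre : preimage n z (p, s)) by (split; auto).
    pose proof (word_of_word n p Hp) as Hw. split; [exact Hw |].
    pose proof (xw_word_of n p (fst z) Hz Hp (preimage_base n z _ Hpre)) as Hx.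
    set (a := ext (word_of n p)) in *. assert (Ha : admissible a) by exact (ext_admissible n _ Hw).
    pose proof (dtau_sum_xw a (fst z) n Ha Hz) as HB.
    pose proof (Ssum_remainder_le a (fst z) n Ha Hz Hn) as HT.
    rewrite Hx in HB, HT |- *. rewrite Dfn_eq in HD. subst v. simpl in Hv1 |- *.
    assert (Hxi : xi <> 0) by (intros ->; apply Hv1; ring).
    pose proof (dEn_pos n p).
    apply (Rle_trans _ ((theta lam K + theta lam M) / dEn E dE n p)).
    + rewrite HB. apply cone_image_slope; auto.
    + apply Rmult_le_compat_r; [left; apply Rinv_0_lt_compat |]; auto.
  - intros zeta1 zeta2 [A1 [B1 [C1 _]]] [A2 [B2 [C2 _]]].
    apply (preimage_word_inj n z); [auto | split | split]; auto.
Qed.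

Lemma count_words_le_Ncount (K Rt eta : R) (n : nat) (z v : R * R) : (1 <= n)%nat ->
  in_S1 (fst z) -> in_S1 (snd z) -> 0 < fst v -> snd v = eta * fst v ->
  Rt + theta lam M <= theta lam K ->
  (fcard (fun w => word ell n w /\
     (Rabs (eta - Ssum E dE dtau (fst z) (ext w))
       <= Rt / dEn E dE n (xw E (fst z) (ext w) n))%R)
   <= Ncount E tau dE dtau lam K n z v)%nat.
Proof.
  intros Hn Hz1 Hz2 Hv Hslope_v HRt. unfold Ncount.
  set (x := fun w => xw E (fst z) (ext w) n).
  destruct (preimage_code n z (fun zeta => in_S1 (fst zeta) /\ in_S1 (snd zeta) /\
      Nat.iter n (f_skew E tau) zeta = z /\ exists w, cone (theta lam K) w /\
      Dfn E tau dE dtau n zeta w = v)) as [Hlt Hinj]; auto.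
  { intros zeta [A [B [C _]]]. split; auto. }
  destruct (finite_of_code _ _ _ Hlt Hinj) as [lQ HlQ].
  apply (fcard_le_inj_on _ _ (fun w => (x w, frac_part (snd z - tau_sum n (x w)))) lQ HlQ).
  - intros w [Hw Hslope]. simpl.
    assert (Ha : admissible (ext w)) by exact (ext_admissible n w Hw).
    destruct (xw_spec (ext w) (fst z) n Ha Hz1) as [[Hp _] Hit]. fold (x w) in Hp, Hit |- *.
    pose proof (dtau_sum_xw (ext w) (fst z) n Ha Hz1) as HB.
    pose proof (Ssum_remainder_le (ext w) (fst z) n Ha Hz1 Hn) as HT.
    fold (x w) in HB, HT, Hslope. set (D := dEn E dE n (x w)) in *.
    assert (HD : 0 < D) by apply dEn_pos.
    split; [exact Hp |]. split; [apply frac_part_range |]. split.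
    + rewrite iter_f_skew, Hit, frac_part_frac_add by apply frac_part_range.
      replace (snd z - tau_sum n (x w) + tau_sum n (x w)) with (snd z) by ring.
      rewrite frac_part_id by exact Hz2. destruct z; reflexivity.
    + exists (fst v / D, snd v - fst v / D * dtau_sum n (x w)). split.
      * unfold cone. simpl. rewrite HB.
        rewrite Hslope_v, Rmult_comm.
        apply (cone_preimage_of_slope _ _ _ _ (Ssum E dE dtau (fst z) (ext w)) Rt _ (theta lam M));
          auto; apply Rabs_minus_sym.
      * rewrite Dfn_eq. fold D. destruct v as [v1 v2]. simpl in *. f_equal; field; lra.
  - intros w1 w2 [Hw1 _] [Hw2 _] Heq. injection Heq as Hx _.
    exact (xw_inj_words n (fst z) w1 w2 Hz1 Hw1 Hw2 Hx).
Qed.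

Lemma Ntil_le_Nf (K Rt : R) (n : nat) : (1 <= n)%nat -> Rt + theta lam M <= theta lam K ->
  (Ntil E dE dtau ell ext Rt n <= Nf E tau dE dtau lam K n)%nat.
Proof.
  intros Hn HRt. unfold Ntil. apply natsup_le. intros [y eta] Hy. simpl in Hy |- *.
  set (sq := sqrt (1 + eta ^ 2)).
  assert (Hsq : 0 < sq) by (apply sqrt_lt_R0; nra).
  assert (Hsq2 : sq * sq = 1 + eta ^ 2) by (apply sqrt_sqrt; nra).
  set (v := (1 / sq, eta / sq)).
  eapply Nat.le_trans.
  - apply (count_words_le_Ncount K Rt eta n (y, 0) v); simpl; auto.
    all: unfold in_S1 in *; try lra. apply Rdiv_lt_0_compat; lra.
  - apply (le_natsup _ (fun zv => Ncount E tau dE dtau lam K n (fst zv) (snd zv)) (ell ^ n)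
      ((y, 0), v)).
    + intros [z v'] [Hz _]. apply Ncount_le_pow; auto.
    + unfold v. cbn [fst snd]. split; [exact Hy |]. split; [unfold in_S1; lra |].
      replace ((1 / sq) ^ 2 + (eta / sq) ^ 2) with ((1 + eta ^ 2) / (sq * sq)) by (field; lra).
      rewrite Hsq2. field. nra.
Qed.

Lemma Nf_le_Ntil (K Rt : R) (n : nat) : (1 <= n)%nat -> theta lam K + theta lam M <= Rt ->
  (Nf E tau dE dtau lam K n <= Ntil E dE dtau ell ext Rt n)%nat.
Proof.
  intros Hn HRt. unfold Nf. apply natsup_le. intros [z v] [Hz [_ Hv]]. simpl.
  eapply Nat.le_trans; [apply (Ncount_le_count_words K Rt); auto |].
  apply (le_natsup _ (fun ye : R * R => fcard (fun w => word ell n w /\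
    (Rabs (snd ye - Ssum E dE dtau (fst ye) (ext w))
      <= Rt / dEn E dE n (xw E (fst ye) (ext w) n))%R)) (ell ^ n) (fst z, snd v / fst v)).
  - intros ye _. apply fcard_words_le.
  - exact Hz.
Qed.

End SkewProduct.

Theorem mainTheorem8
  (r ell : nat) (E dE tau dtau : R -> R) (lam Lam : R)
  (hr : (2 <= r)%nat) (hell : (2 <= ell)%nat)
  (hE : Cr r E) (hdE : forall x, derivable_pt_lim E x (dE x))
  (hEdeg : forall x, E (x + 1) = E x + INR ell)
  (hE0 : E 0 = 0)
  (hlam : 1 < lam) (hexp : forall x, lam <= dE x <= Lam)
  (htau : Cr r tau) (hdtau : forall x, derivable_pt_lim tau x (dtau x))
  (htau_per : forall x, tau (x + 1) = tau x)
  (ext : list nat -> nat -> nat) (hext : ext_ok ell ext) :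
  (forall K Rt, supnorm dtau < K -> 0 < Rt ->
     theta lam K - theta lam (supnorm dtau) >= Rt ->
     forall n, (1 <= n)%nat ->
       (Ntil E dE dtau ell ext Rt n <= Nf E tau dE dtau lam K n)%nat)
  /\
  (forall K Rt, supnorm dtau < K ->
     Rt > theta lam K + theta lam (supnorm dtau) ->
     forall n, (1 <= n)%nat ->
       (Nf E tau dE dtau lam K n <= Ntil E dE dtau ell ext Rt n)%nat)
  /\
  (Ntau_is E tau dE dtau lam 1 <->
   forall Rt, 0 < Rt ->
     Un_cv (fun n => ln (INR (Ntil E dE dtau ell ext Rt n)) / INR n) 0).
Proof.
  set (M := supnorm dtau).
  assert (hM : forall x, Rabs (dtau x) <= M).
  { apply supnorm_ge, periodic_continuous_bounded.
    - destruct r as [| k]; [lia |]. exact (Cr_derivative_continuous k tau dtau htau hdtau).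
    - exact (derivative_periodic tau dtau hdtau htau_per). }
  assert (hlo : forall x, lam <= dE x) by (intro x; apply hexp).
  pose proof (M_nonneg dtau M hM) as hM0.
  pose proof (Ntil_le_Nf ell E dE tau dtau lam M ext hdE hlo hlam hEdeg hE0 hM hext) as Hlow.
  pose proof (Nf_le_Ntil ell E dE tau dtau lam M ext hdE hlo hlam hEdeg hE0 hM hext) as Hup.
  split; [intros K Rt _ _ HRt n Hn; apply Hlow; auto; lra |].
  split; [intros K Rt _ HRt n Hn; apply Hup; auto; lra |].
  split.
  - intros HN Rt HRt.
    set (K := M + Rt * (lam - 1)).
    assert (HK : M < K) by (unfold K; nra).
    assert (HthK : theta lam K = Rt + theta lam M) by (unfold theta, K; field; lra).
    apply (growth_rate_zero_le _ (Nf E tau dE dtau lam K)).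
    + intros n Hn. apply Hlow; [exact Hn | lra].
    + apply root_cv_1_iff_growth_rate_zero, HN, HK.
  - intros HT K HK. fold M in HK.
    assert (HthK : 0 < theta lam K) by (unfold theta; apply Rdiv_lt_0_compat; lra).
    assert (HthM : 0 <= theta lam M)
      by (unfold theta; apply Rmult_le_pos; [| left; apply Rinv_0_lt_compat]; lra).
    apply root_cv_1_iff_growth_rate_zero.
    apply (growth_rate_zero_le _ (Ntil E dE dtau ell ext (theta lam K + theta lam M))).
    + intros n Hn. apply Hup; [exact Hn | lra].
    + apply HT. lra.
Qed.
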